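(* Consider the following regulation game. A random triple $(\theta,s,d)$ (agent type, training state, deployment state) has joint distribution $\pi$. Prediction functions are vectors $f\in\mathbb{R}^n$. Given $s$ (and $\theta$), expected agent utility and expected principal welfare are $\overline{U}_\theta(f;s) = -(f-\bar u)'\overline{\Omega}_U(f-\bar u)$ and $\overline{W}(f;s) = -(f-\bar w)'\overline{\Omega}_W(f-\bar w)$, with $\bar u=\bar u(s,\theta)$, $\bar w=\bar w(s)\in\mathbb{R}^n$ and symmetric positive semidefinite weight matrices. The principal first (knowing only $\pi$) chooses a linear explainer, i.e. a $k\times n$ real matrix $\mathcal{E}$, and possibly an ex-ante restriction $\{f: Af=a\}$ with $A,a$ not depending on $s,\theta$; after observing $s$ she dictates the value $\mathcal{E}f=e(s)$ (failing the audit has infinite cost to the agent). The agent, knowing $\theta,s$, chooses $f$ maximizing $\overline{U}_\theta(f;s)$ subject to these constraints. For a random vector $\hat f=\hat f(s,\theta)\in\mathbb{R}^n$ and a symmetric positive definite matrix $\Omega$, the prediction explainer for $\hat f$ (with weight $\Omega$) is $$\mathcal{E}_0\in\arg\min_{\mathcal{E}\in\mathbb{R}^{k\times n}} \mathop{E}_\pi\big[(\hat f-\mathop{E}_\pi[\hat f\mid \mathcal{E}\hat f])'\,\Omega\,(\hat f-\mathop{E}_\pi[\hat f\mid \mathcal{E}\hat f])\big].$$ Assume $\overline{\Omega}_U$ is fixed (non-random) and of full rank, $\operatorname{rank}\mathop{E}_\pi[(\bar u-\bar w)(\bar u-\bar w)']\le k$, and $\operatorname{rank}\operatorname{Var}_\pi(\bar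 u-\bar w)=\operatorname{rank}\mathop{E}_\pi[(\bar u-\bar w)(\bar u-\bar w)']$. Then the optimal explainer achieving the first-best welfare outcome $f=\bar w$ (with $\overline{W}(f;s)\equiv 0$) is the prediction explainer for $\hat f=\bar u-\bar w$, with some full-rank weight matrix $\Omega$. *)

From HB Require Import structures.
From mathcomp Require Import all_boot all_order all_algebra.
From mathcomp Require Import all_classical all_reals all_analysis.
Set Implicit Arguments.
Unset Strict Implicit.
Unset Printing Implicit Defensive.
Import Order.TTheory GRing.Theory Num.Theory.
Import numFieldNormedType.Exports.
Local Open Scope classical_set_scope.
Local Open Scope ring_scope.

Section Defs.
Context (R : realType).

Definition qform (n : nat) (M : 'M[R]_n) (v : 'cV[R]_n) : R :=
  ((v^T *m M *m v) 0 0).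

Definition psd (n : nat) (M : 'M[R]_n) : Prop :=
  forall v : 'cV[R]_n, 0 <= qform M v.

Definition pd (n : nat) (M : 'M[R]_n) : Prop :=
  forall v : 'cV[R]_n, v != 0 -> 0 < qform M v.

Context (dT : measure_display) (T : measurableType dT) (P : probability T R).

Definition second_moment (n : nat) (x : T -> 'cV[R]_n) : 'M[R]_n :=
  \matrix_(i, j) fine (\int[P]_z ((x z i 0 * x z j 0)%:E)).

Definition mean_vec (n : nat) (x : T -> 'cV[R]_n) : 'cV[R]_n :=
  \col_i fine (\int[P]_z ((x z i 0)%:E)).

Definition variance_mx (n : nat) (x : T -> 'cV[R]_n) : 'M[R]_n :=
  second_moment x - mean_vec x *m (mean_vec x)^T.

Definition gen_sets (k : nat) (y : T -> 'cV[R]_k) : set (set T) :=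
  [set A | exists (j : 'I_k) (B : set R),
             measurable B /\ A = (fun z => y z j 0) @^-1` B].

Definition sigma_of (k : nat) (y : T -> 'cV[R]_k) : set (set T) :=
  <<s gen_sets y >>.

Definition is_cond_exp (n k : nat) (x : T -> 'cV[R]_n) (y : T -> 'cV[R]_k)
    (Y : T -> 'cV[R]_n) : Prop :=
  forall i : 'I_n,
    (forall B : set R, measurable B -> sigma_of y ((fun z => Y z i 0) @^-1` B))
    /\ P.-integrable setT (fun z => (Y z i 0)%:E)
    /\ (forall A, sigma_of y A ->
          (\int[P]_(z in A) (Y z i 0)%:E = \int[P]_(z in A) (x z i 0)%:E)%E).

Definition pred_loss (n : nat) (Om : 'M[R]_n) (fh Y : T -> 'cV[R]_n) : \bar R :=
  (\int[P]_z (qform Om (fh z - Y z))%:E)%E.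

(* E0 is a prediction explainer for fh with weight Om:
   E0 minimizes E[(fh - E[fh | E fh])' Om (fh - E[fh | E fh])] over all
   k x n matrices E (the loss does not depend on the version of the
   conditional expectation). *)
Definition prediction_explainer (n k : nat) (Om : 'M[R]_n) (fh : T -> 'cV[R]_n)
    (E0 : 'M[R]_(k, n)) : Prop :=
  exists Y0, is_cond_exp fh (fun z => E0 *m fh z) Y0 /\
    forall (E : 'M[R]_(k, n)) Y, is_cond_exp fh (fun z => E *m fh z) Y ->
      (pred_loss Om fh Y0 <= pred_loss Om fh Y)%E.

End Defs.

Section Game.
Context (R : realType).

Definition agent_util (n : nat) (OmU : 'M[R]_n) (ub f : 'cV[R]_n) : R :=
  - qform OmU (f - ub).

Definition best_response (n k : nat) (OmU : 'M[R]_n) (ub : 'cV[R]_n)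
    (E : 'M[R]_(k, n)) (e : 'cV[R]_k) (f : 'cV[R]_n) : Prop :=
  E *m f = e /\
  forall g : 'cV[R]_n, E *m g = e -> agent_util OmU ub g <= agent_util OmU ub f.

Definition first_best (n k : nat) (OmU : 'M[R]_n) (ub wb : 'cV[R]_n)
    (E : 'M[R]_(k, n)) (e : 'cV[R]_k) : Prop :=
  best_response OmU ub E e wb /\
  forall f, best_response OmU ub E e f -> f = wb.

End Game.

(* the random vector  ubar(s,theta) - wbar(s)  on triples z = ((theta,s),d) *)
Definition gapv (R : realType) (Th S D : Type) (n : nat)
    (ubar : S -> Th -> 'cV[R]_n) (wbar : S -> 'cV[R]_n) (z : Th * S * D) : 'cV[R]_n :=
  (ubar z.1.2 z.1.1 - wbar z.1.2)%R.

From HB Require Import structures.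
From mathcomp Require Import all_boot all_order all_algebra.
From mathcomp Require Import all_classical all_reals all_analysis.
From mathcomp Require Import measurable_realfun ring lra.
Import Order.TTheory GRing.Theory Num.Theory.
Import numFieldNormedType.Exports.
Local Open Scope classical_set_scope.
Local Open Scope ring_scope.

(* The gap x = ubar - wbar lies almost surely in the row space V of its second
   moment M = E[x x'], since a direction v with v'Mv = E[(v'x)^2] = 0 is a.s.
   orthogonal to x; and dim V = rank M <= k.  Take Om = OmU, which is positive
   definite as a full-rank psd matrix, and E0 = J B OmU, where the rows of B are
   a basis of V and J embeds R^(rank M) into R^k.  Then E0 is injective on V, so
   E0 x determines x and E0 has zero prediction loss; and ker E0 is
   OmU-orthogonal to V, so under the audit E0 f = E0 wbar the agent's loss
   splits as |f - ubar|^2 = |wbar - ubar|^2 + |f - wbar|^2 and is minimised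
   exactly at f = wbar. *)

Lemma quadratic_ge0_linear_coef_eq0 (R : realFieldType) (a b : R) :
  (forall t, 0 <= 2 * t * a + t ^+ 2 * b) -> a = 0.
Proof.
move=> h; have b0 : 0 <= b by have := h 1; have := h (-1); lra.
have b1 : 0 < b + 1 by lra.
have := h (- a / (b + 1)).
have -> : 2 * (- a / (b + 1)) * a + (- a / (b + 1)) ^+ 2 * b
        = - a ^+ 2 * (b + 2) / (b + 1) ^+ 2.
  by field; rewrite gt_eqF.
rewrite pmulr_lge0 ?invr_gt0 ?exprn_gt0 // => ha.
by apply/eqP; rewrite -sqrf_eq0 eq_le sqr_ge0 andbT; nra.
Qed.

Lemma normrM_le_sqrD (R : realFieldType) (a b : R) : `|a * b| <= a ^+ 2 + b ^+ 2.
Proof.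
rewrite normrM -(real_normK (num_real a)) -(real_normK (num_real b)).
have := mulr_ge0 (normr_ge0 a) (normr_ge0 b); have := sqr_ge0 (`|a| - `|b|); nra.
Qed.

Lemma normr_le_1_sqr (R : realFieldType) (a : R) : `|a| <= 1 + a ^+ 2.
Proof. by rewrite -(real_normK (num_real a)); have := sqr_ge0 (`|a| - 1); nra. Qed.

Section QuadraticForm.
Context {R : realType} {n : nat} (Om : 'M[R]_n).

Definition bform (a b : 'cV[R]_n) : R := (a^T *m Om *m b) 0 0.

Lemma qformE a : qform Om a = bform a a. Proof. by []. Qed.

Lemma bformDl a b c : bform (a + b) c = bform a c + bform b c.
Proof. by rewrite /bform linearD /= !mulmxDl mxE. Qed.

Lemma bformDr a b c : bform a (b + c) = bform a b + bform a c.
Proof. by rewrite /bform !mulmxDr mxE. Qed.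

Lemma bformZr a t b : bform a (t *: b) = t * bform a b.
Proof. by rewrite /bform -scalemxAr mxE. Qed.

Lemma bformZl t a b : bform (t *: a) b = t * bform a b.
Proof. by rewrite /bform linearZ /= -!scalemxAl mxE. Qed.

Lemma qformZ t a : qform Om (t *: a) = t ^+ 2 * qform Om a.
Proof. by rewrite !qformE bformZl bformZr mulrA -expr2. Qed.

Lemma bformNl a b : bform (- a) b = - bform a b.
Proof. by rewrite /bform linearN /= !mulNmx mxE. Qed.

Lemma pd_psd : pd Om -> psd Om.
Proof.
move=> pdOm a; have [->|a0] := eqVneq a 0; last exact/ltW/pdOm.
by rewrite /qform mulmx0 mxE.
Qed.

Hypothesis Om_sym : Om^T = Om.

Lemma bformC a b : bform a b = bform b a.
Proof.
rewrite /bform -[in LHS](trmxK (a^T *m Om *m b)) [in LHS]mxE.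
by rewrite !trmx_mul trmxK Om_sym mulmxA.
Qed.

Lemma qformD a b : qform Om (a + b) = qform Om a + 2 * bform a b + qform Om b.
Proof. by rewrite !qformE bformDl !bformDr (bformC b a); ring. Qed.

Lemma psd_qform_eq0 a : psd Om -> qform Om a = 0 -> Om *m a = 0.
Proof.
move=> psdOm qa0.
have orth b : bform a b = 0.
  apply: (@quadratic_ge0_linear_coef_eq0 _ _ (qform Om b)) => t.
  by have := psdOm (a + t *: b); rewrite qformD qa0 bformZr qformZ; lra.
have := orth (Om *m a); rewrite /bform -{1}Om_sym -trmx_mul mxE.
under eq_bigr do rewrite mxE -expr2.
move=> /psumr_eq0P sq0; apply/matrixP => i j; rewrite (ord1 j) [RHS]mxE.
by apply/eqP; rewrite -sqrf_eq0 sq0 // => l _; exact: sqr_ge0.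
Qed.

Lemma psd_full_rank_pd : psd Om -> \rank Om = n -> pd Om.
Proof.
move=> psdOm rankOm a a0; rewrite lt_def psdOm andbT; apply: contraNN a0 => /eqP qa0.
have Om_unit : Om \in unitmx by rewrite -row_free_unit /row_free rankOm.
by rewrite -(mulKmx Om_unit a) (psd_qform_eq0 _ psdOm qa0) mulmx0.
Qed.

Hypothesis Om_pd : pd Om.

Lemma first_best_of_orthogonal (k : nat) (E : 'M[R]_(k, n)) (u w : 'cV[R]_n) :
  (forall h, E *m h = 0 -> bform (u - w) h = 0) -> first_best Om u w E (E *m w).
Proof.
move=> orth.
have pythagoras g : E *m g = E *m w ->
    qform Om (g - u) = qform Om (w - u) + qform Om (g - w).
  move=> Eg; have Eh : E *m (g - w) = 0 by rewrite mulmxBr Eg subrr.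
  have -> : g - u = (w - u) + (g - w) by rewrite [RHS]addrC addrA subrK.
  by rewrite qformD -[X in bform X _]opprB bformNl orth // oppr0 mulr0 addr0.
split.
  by split=> // g Eg; rewrite /agent_util lerN2 (pythagoras g) // lerDl pd_psd.
move=> f [Ef best_f]; have := best_f w erefl.
rewrite /agent_util lerN2 (pythagoras f) // gerDl => le0.
apply/eqP; rewrite -subr_eq0; apply: contraLR le0 => /Om_pd.
by rewrite -ltNge.
Qed.

End QuadraticForm.

Section RowSpaceExplainer.
Context {R : realType} {m n : nat} (k : nat) (Om : 'M[R]_n) (M : 'M[R]_(m, n)).

Local Notation B := (row_base M).
Local Notation r := (\rank M).

Definition gram_mx : 'M[R]_r := B *m Om *m B^T.

Definition explainer_mx : 'M[R]_(k, n) := pid_mx r *m B *m Om.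

Definition decoder_mx : 'M[R]_(n, k) := B^T *m invmx gram_mx *m pid_mx r.

Hypotheses (Om_sym : Om^T = Om) (Om_pd : pd Om) (rank_le : (r <= k)%N).

Lemma gram_unitmx : gram_mx \in unitmx.
Proof.
rewrite -row_free_unit -kermx_eq0; apply/eqP/row_matrixP => i; rewrite row0.
set u := row i (kermx gram_mx); set p := u *m B.
have uG : u *m gram_mx = 0 by rewrite -row_mul mulmx_ker row0.
have p0 : p^T = 0.
  apply/eqP; apply: contraT => /Om_pd; rewrite /qform trmxK.
  have -> : p *m Om *m p^T = u *m gram_mx *m u^T.
    by rewrite /p /gram_mx trmx_mul !mulmxA.
  by rewrite uG mul0mx mxE ltxx.
by apply: (row_free_inj (row_base_free M)); rewrite mul0mx -/p -[p]trmxK p0 trmx0.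
Qed.

Lemma pid_mx_mulK : (pid_mx r : 'M[R]_(r, k)) *m (pid_mx r : 'M[R]_(k, r)) = 1%:M.
Proof. by rewrite mul_pid_mx minnn (minn_idPr rank_le) pid_mx_1. Qed.

Lemma decoder_explainerK (x : 'cV[R]_n) :
  (x^T <= M)%MS -> decoder_mx *m (explainer_mx *m x) = x.
Proof.
move=> xM; have /submxP [s xE] : (x^T <= B)%MS by rewrite eq_row_base.
rewrite -[x]trmxK xE trmx_mul.
have -> : decoder_mx *m (explainer_mx *m (B^T *m s^T)) =
    B^T *m invmx gram_mx *m ((pid_mx r : 'M[R]_(r, k)) *m pid_mx r) *m (gram_mx *m s^T).
  by rewrite /decoder_mx /explainer_mx /gram_mx !mulmxA.
by rewrite pid_mx_mulK mulmx1 mulmxA -(mulmxA B^T) mulVmx ?gram_unitmx // mulmx1.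
Qed.

Lemma explainer_kernel_orthogonal (x h : 'cV[R]_n) :
  (x^T <= M)%MS -> explainer_mx *m h = 0 -> bform Om x h = 0.
Proof.
move=> xM Eh; have /submxP [s xE] : (x^T <= B)%MS by rewrite eq_row_base.
rewrite /bform xE.
have -> : s *m B *m Om *m h = s *m pid_mx r *m (explainer_mx *m h).
  by rewrite /explainer_mx !mulmxA -[s *m _ *m pid_mx r]mulmxA pid_mx_mulK mulmx1.
by rewrite Eh mulmx0 mxE.
Qed.

Lemma explainer_first_best (u w : 'cV[R]_n) :
  ((u - w)^T <= M)%MS -> first_best Om u w explainer_mx (explainer_mx *m w).
Proof.
move=> uwM; apply: first_best_of_orthogonal => // h.
exact: explainer_kernel_orthogonal.
Qed.

End RowSpaceExplainer.

Section MeasurableMulmx.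
Context {R : realType} {d : measure_display} {T : measurableType d}.

Lemma measurable_mulmx {m n} (A : 'M[R]_(m, n)) {x : T -> 'cV[R]_n} :
  (forall j, measurable_fun setT (fun z => x z j 0)) ->
  forall i, measurable_fun setT (fun z => (A *m x z) i 0).
Proof.
move=> mx i; under eq_fun do rewrite mxE.
by apply: measurable_sum => j; apply: measurable_funM.
Qed.

Lemma measurable_qform {n} (Om : 'M[R]_n) (v : T -> 'cV[R]_n) :
  (forall j, measurable_fun setT (fun z => v z j 0)) ->
  measurable_fun setT (fun z => qform Om (v z)).
Proof.
move=> mv; rewrite /qform; under eq_fun do rewrite -mulmxA mxE.
apply: measurable_sum => j; apply: measurable_funM; last exact: measurable_mulmx.
by under eq_fun do rewrite mxE; exact: mv.
Qed.

End MeasurableMulmx.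

Section LinearCombinations.
Context {R : realType} {d : measure_display} {T : measurableType d}.
Context (mu : {measure set T -> \bar R}).

Lemma integrable_comb (I : finType) (c : I -> R) (f : I -> T -> R) :
  (forall i, mu.-integrable setT (fun z => (f i z)%:E)) ->
  mu.-integrable setT (fun z => (\sum_i c i * f i z)%:E).
Proof.
move=> intf; under eq_fun do rewrite -sumEFin.
by apply: integrable_sum => // i _; under eq_fun do rewrite EFinM; exact: integrableZl.
Qed.

Lemma integral_comb (I : finType) (c : I -> R) (f : I -> T -> R) :
  (forall i, mu.-integrable setT (fun z => (f i z)%:E)) ->
  (\int[mu]_z (\sum_i c i * f i z)%:E =
   (\sum_i c i * fine (\int[mu]_z (f i z)%:E))%:E)%E.
Proof.
move=> intf; have intcf i : mu.-integrable setT (fun z => (c i * f i z)%:E).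
  by under eq_fun do rewrite EFinM; exact: integrableZl.
under eq_integral do rewrite -sumEFin.
rewrite (integral_sum measurableT intcf) -sumEFin; apply: eq_bigr => i _.
under eq_integral do rewrite EFinM.
by rewrite integralZl // EFinM fineK // integrable_fin_num.
Qed.

Lemma integrable_mulmx {m n} (A : 'M[R]_(m, n)) {x : T -> 'cV[R]_n} :
  (forall j, mu.-integrable setT (fun z => (x z j 0)%:E)) ->
  forall i, mu.-integrable setT (fun z => ((A *m x z) i 0)%:E).
Proof. by move=> ix i; under eq_fun do rewrite mxE; exact: integrable_comb. Qed.

Lemma ae_eq0_of_integral_sqr {f : T -> R} : measurable_fun setT f ->
  (\int[mu]_z (f z ^+ 2)%:E = 0)%E -> {ae mu, forall z, f z = 0}.
Proof.
move=> mf int0.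
have mf2 : measurable_fun setT (fun z => (f z ^+ 2)%:E).
  by apply/measurable_EFinP; exact: measurable_funX.
have /(ae_eq_integral_abs mu measurableT mf2) : (\int[mu]_z `|(f z ^+ 2)%:E| = 0)%E.
  by rewrite -int0; apply: eq_integral => z _; rewrite gee0_abs // lee_fin sqr_ge0.
by apply: filterS => z /(_ I) /eqP; rewrite eqe sqrf_eq0 => /eqP.
Qed.

End LinearCombinations.

Section SecondMoment.
Context {R : realType} {d : measure_display} {T : measurableType d}.
Context (P : probability T R) {n : nat} (x : T -> 'cV[R]_n).
Hypothesis x_meas : forall i, measurable_fun setT (fun z => x z i 0).
Hypothesis x_sqr_int : forall i, P.-integrable setT (fun z => (x z i 0 ^+ 2)%:E).

Lemma integrable_product i j : P.-integrable setT (fun z => (x z i 0 * x z j 0)%:E).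
Proof.
have sqr_sum_int := integrableD measurableT (x_sqr_int i) (x_sqr_int j).
apply: (le_integrable measurableT _ _ sqr_sum_int).
  by apply/measurable_EFinP; exact: measurable_funM.
by move=> z _; rewrite lee_fin [`|_ + _|]ger0_norm ?addr_ge0 ?sqr_ge0 ?normrM_le_sqrD.
Qed.

Lemma integrable_component i : P.-integrable setT (fun z => (x z i 0)%:E).
Proof.
have int1 : P.-integrable setT (fun z => (1 + x z i 0 ^+ 2)%:E).
  apply: eq_integrable (integrableD measurableT
    (finite_measure_integrable_cst P 1 measurableT) (x_sqr_int i)) => //.
apply: (le_integrable measurableT _ _ int1); first exact/measurable_EFinP.
by move=> z _; rewrite lee_fin [`|_ + _|]ger0_norm ?addr_ge0 ?sqr_ge0 ?normr_le_1_sqr.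
Qed.

Lemma integral_sqr_comb (v : 'cV[R]_n) :
  (\int[P]_z ((v^T *m x z) 0 0 ^+ 2)%:E =
   ((v^T *m second_moment P x *m v) 0 0)%:E)%E.
Proof.
have expand z : (v^T *m x z) 0 0 ^+ 2 =
    \sum_(p : 'I_n * 'I_n) (v p.1 0 * v p.2 0) * (x z p.1 0 * x z p.2 0).
  rewrite mxE expr2 big_distrlr pair_bigA; apply: eq_bigr => -[i j] _ /=.
  by rewrite !mxE; ring.
under eq_integral do rewrite expand.
rewrite integral_comb => [|p]; last exact: integrable_product.
congr (_%:E); apply: esym; rewrite mxE; under eq_bigr do rewrite mxE mulr_suml.
rewrite exchange_big pair_bigA; apply: eq_bigr => -[i j] _ /=.
by rewrite /second_moment !mxE; ring.
Qed.

Lemma ae_rowspace_second_moment :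
  {ae P, forall z, ((x z)^T <= second_moment P x)%MS}.
Proof.
set M := second_moment P x.
have ae_col j : {ae P, forall z, ((x z)^T *m col j (cokermx M)) 0 0 = 0}.
  set v := col j (cokermx M).
  have Mv : M *m v = 0 by rewrite /v colE mulmxA mulmx_coker mul0mx.
  have := integral_sqr_comb v; rewrite -mulmxA Mv mulmx0 mxE.
  move=> /(ae_eq0_of_integral_sqr P (measurable_mulmx v^T x_meas 0)).
  by apply: filterS => z; rewrite -[x z in LHS]trmxK -trmx_mul mxE.
apply: filterS (filter_forall (ae_filter_ringOfSetsType P) ae_col) => z x_col0.
rewrite submxE; apply/eqP/matrixP => i j; rewrite (ord1 i) [RHS]mxE.
by move: (x_col0 j); rewrite colE mulmxA -colE mxE.
Qed.

End SecondMoment.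

Section GeneratedSigmaAlgebra.
Context {R : realType} {d : measure_display} {T : measurableType d} {k : nat}.
Context (y : T -> 'cV[R]_k).

Lemma sigma_of_mulmx m (A : 'M[R]_(m, k)) i (B : set R) : measurable B ->
  sigma_of y ((fun z => (A *m y z) i 0) @^-1` B).
Proof.
have y_meas j : measurable_fun (setT : set (g_sigma_algebraType (gen_sets y)))
    (fun z => y z j 0).
  by move=> _ C mC; rewrite setTI; apply: sub_gen_smallest; exists j, C.
by move=> mB; rewrite -[_ @^-1` B]setTI; exact: (measurable_mulmx A y_meas i).
Qed.

Lemma sigma_of_measurable : (forall j, measurable_fun setT (fun z => y z j 0)) ->
  forall A, sigma_of y A -> measurable A.
Proof.
move=> y_meas A; apply: smallest_sub; first exact: sigma_algebra_measurable.
by move=> _ [j [B [mB ->]]]; rewrite -[_ @^-1` B]setTI; exact: y_meas.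
Qed.

End GeneratedSigmaAlgebra.

Section PredictionExplainer.
Context {R : realType} {d : measure_display} {T : measurableType d}.
Context (P : probability T R) {n k : nat} (x : T -> 'cV[R]_n).
Hypothesis x_meas : forall i, measurable_fun setT (fun z => x z i 0).
Hypothesis x_int : forall i, P.-integrable setT (fun z => (x z i 0)%:E).

Lemma is_cond_exp_decoded (E : 'M[R]_(k, n)) (L : 'M[R]_(n, k)) :
  {ae P, forall z, L *m (E *m x z) = x z} ->
  is_cond_exp P x (fun z => E *m x z) (fun z => L *m (E *m x z)).
Proof.
move=> x_decoded i.
have LEx_meas : measurable_fun setT (fun z => (L *m (E *m x z)) i 0).
  by under eq_fun do rewrite mulmxA; exact: measurable_mulmx.
split; [exact: sigma_of_mulmx | split].
  by under eq_fun do rewrite mulmxA; exact: integrable_mulmx.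
move=> A sA; have mA : measurable A.
  by apply: sigma_of_measurable sA; exact: measurable_mulmx.
apply: ae_eq_integral => //.
- by apply/measurable_EFinP; apply: measurable_funTS.
- by apply/measurable_EFinP; apply: measurable_funTS.
- by apply: filterS x_decoded => z ->.
Qed.

Lemma pred_loss_ge0 (Om : 'M[R]_n) (Y : T -> 'cV[R]_n) :
  psd Om -> (0 <= pred_loss P Om x Y)%E.
Proof. by move=> psdOm; apply: integral_ge0 => z _; rewrite lee_fin. Qed.

Lemma pred_loss_eq0 (Om : 'M[R]_n) (Y : T -> 'cV[R]_n) :
  (forall i, measurable_fun setT (fun z => Y z i 0)) ->
  {ae P, forall z, Y z = x z} -> pred_loss P Om x Y = 0%E.
Proof.
move=> Y_meas Y_ae; rewrite /pred_loss (ae_eq_integral (cst 0%E)) ?integral0 //.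
- apply/measurable_EFinP/measurable_qform => i; under eq_fun do rewrite !mxE.
  exact: measurable_funB.
- by apply: filterS Y_ae => z -> _; rewrite subrr /qform mulmx0 mxE.
Qed.

Lemma prediction_explainer_of_decoder (Om : 'M[R]_n) (E : 'M[R]_(k, n))
    (L : 'M[R]_(n, k)) :
  psd Om -> {ae P, forall z, L *m (E *m x z) = x z} ->
  prediction_explainer P Om x E.
Proof.
move=> psdOm x_decoded; exists (fun z => L *m (E *m x z)); split.
  exact: is_cond_exp_decoded.
move=> E' Y _; rewrite pred_loss_eq0 ?pred_loss_ge0 // => i.
by under eq_fun do rewrite mulmxA; exact: measurable_mulmx.
Qed.

End PredictionExplainer.

Theorem proposition2 (R : realType)
  (dTh dS dD : measure_display)
  (Th : measurableType dTh) (S : measurableType dS) (D : measurableType dD)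
  (pi : probability (Th * S * D)%type R)
  (n k : nat) (OmU : 'M[R]_n)
  (ubar : S -> Th -> 'cV[R]_n) (wbar : S -> 'cV[R]_n) :
  OmU^T = OmU -> psd OmU -> \rank OmU = n ->
  (forall i : 'I_n, measurable_fun setT (fun z : Th * S * D => ubar z.1.2 z.1.1 i 0)) ->
  (forall i : 'I_n, measurable_fun setT (fun z : Th * S * D => wbar z.1.2 i 0)) ->
  (forall i : 'I_n, pi.-integrable setT
      (fun z : Th * S * D => ((gapv ubar wbar z i 0) ^+ 2)%:E)) ->
  (\rank (second_moment pi (@gapv R Th S D n ubar wbar))
     <= k)%N ->
  \rank (variance_mx pi (@gapv R Th S D n ubar wbar))
    = \rank (second_moment pi (@gapv R Th S D n ubar wbar)) ->
  exists Om : 'M[R]_n, Om^T = Om /\ pd Om /\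
    exists E0 : 'M[R]_(k, n),
      prediction_explainer pi Om
        (@gapv R Th S D n ubar wbar) E0 /\
      exists e : S -> 'cV[R]_k,
        {ae pi, forall z : Th * S * D,
           first_best OmU (ubar z.1.2 z.1.1) (wbar z.1.2) E0 (e z.1.2)}.
Proof.
move=> OmU_sym OmU_psd OmU_rank u_meas w_meas gap_sqr_int rank_le _.
set x := gapv ubar wbar; set M := second_moment pi x.
have x_meas i : measurable_fun setT (fun z => x z i 0).
  by under eq_fun do rewrite !mxE; exact: measurable_funB.
have x_int := integrable_component pi x x_meas gap_sqr_int.
have x_in_M := ae_rowspace_second_moment pi x x_meas gap_sqr_int.
have OmU_pd : pd OmU by exact: psd_full_rank_pd.
exists OmU; split=> //; split=> //.
exists (explainer_mx k OmU M); split.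
  apply: (prediction_explainer_of_decoder _ _ x_meas x_int _ _
            (decoder_mx k OmU M) OmU_psd).
  by apply: filterS x_in_M => z; exact: decoder_explainerK.
exists (fun s => explainer_mx k OmU M *m wbar s).
by apply: filterS x_in_M => z; exact: explainer_first_best.
Qed.
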